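(* Let $N\in\mathbb{N}$ and let $\{g_1,\ldots,g_h\}$ be a generating set for $\Gamma_1(N)$. For $i=1,\ldots,h$, let $\gamma_i\in\langle T,W\rangle g_i\langle T,W\rangle$ be a matrix with top row $(r_i\ \ b_i)$, and choose $m_i\in\mathbb{Z}$ with $m_i\mid\frac{r_i-1}N$. Then for any $q\in\mathbb{N}$ satisfying $(q,Nm_i)=1$ and $q\equiv Nm_ib_i\pmod{r_i}$ for every $i$, we have $H_q\supseteq\Gamma_1(N)$.
   Context: $T=\begin{pmatrix}1&1\\0&1\end{pmatrix}$, $W=\begin{pmatrix}1&0\\N&1\end{pmatrix}$. For $q\in\mathbb{N}$ coprime to $N$, $H_q$ denotes the subgroup of $\Gamma_0(N)$ generated by all matrices $\begin{pmatrix}A&B\\C&D\end{pmatrix}\in\Gamma_0(N)$ with $A=q$. *)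

From mathcomp Require Import all_boot all_algebra.
Set Implicit Arguments. Unset Strict Implicit. Unset Printing Implicit Defensive.
Import GRing.Theory Num.Theory.
Local Open Scope ring_scope.

Definition mat := 'M[int]_2.

Definition eA (g : mat) : int := g ord0 ord0.
Definition eB (g : mat) : int := g ord0 ord_max.
Definition eC (g : mat) : int := g ord_max ord0.
Definition eD (g : mat) : int := g ord_max ord_max.

Definition SL2 (g : mat) : bool := \det g == 1.

Definition Gamma0 (N : nat) (g : mat) : bool :=
  SL2 g && (N%:Z %| eC g)%Z.

Definition Gamma1 (N : nat) (g : mat) : bool :=
  [&& Gamma0 N g, (eA g == 1 %[mod N%:Z])%Z & (eD g == 1 %[mod N%:Z])%Z].

(* T = [[1,1],[0,1]],  W = [[1,0],[N,1]] *)
Definition Tmat : mat :=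
  \matrix_(i, j) (if (i == ord0) && (j == ord_max) then 1 else (i == j)%:R).
Definition Wmat (N : nat) : mat :=
  \matrix_(i, j) (if (i == ord_max) && (j == ord0) then N%:Z else (i == j)%:R).

Definition group_closed (P : mat -> Prop) : Prop :=
  [/\ P 1%:M, (forall x y, P x -> P y -> P (x *m y)) & (forall x, P x -> P (invmx x))].

Definition gen (S : mat -> Prop) (x : mat) : Prop :=
  forall P : mat -> Prop, group_closed P -> (forall s, S s -> P s) -> P x.

Definition TW (N : nat) : mat -> Prop := gen (fun s => s = Tmat \/ s = Wmat N).

Definition in_TW_double_coset (N : nat) (g gam : mat) : Prop :=
  exists u v, [/\ TW N u, TW N v & gam = u *m g *m v].

Definition Hq (N q : nat) : mat -> Prop :=
  gen (fun s => Gamma0 N s /\ eA s = q%:Z).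

(** H_q is a group containing every matrix of Gamma_0(N) with top-left entry q.
    Bezout's identity for q and N m gives such a matrix Y with lower-left entry
    N m; since Y T^k and W Y again have top-left entry q, H_q contains T and W,
    hence <T, W>, so g_i lies in H_q as soon as gamma_i does. Writing (r b)
    for the top row of gamma_i and r = 1 + w N m, the matrix gamma_i T^-s Y
    has top-left entry q exactly when s r = w q + b, and the congruence
    q = N m b (mod r) is what makes this s an integer. *)
From mathcomp Require Import all_boot all_algebra ring.
Set Implicit Arguments. Unset Strict Implicit.
Import GRing.Theory Num.Theory.
Local Open Scope ring_scope.

Lemma gen_group_closed (S : mat -> Prop) : group_closed (gen S).
Proof.
split=> [P [] //| x y Sx Sy P PG PS | x Sx P PG PS]; case: (PG) => _ PM PV.
  exact: PM (Sx P PG PS) (Sy P PG PS).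
exact: PV (Sx P PG PS).
Qed.

Lemma gen_mem (S : mat -> Prop) (x : mat) : S x -> gen S x.
Proof. by move=> Sx P _; apply. Qed.

Lemma gen_mulmx (S : mat -> Prop) (x y : mat) : gen S x -> gen S y -> gen S (x *m y).
Proof. by case: (gen_group_closed S) => _ + _; apply. Qed.

Lemma gen_subset (S S' : mat -> Prop) (x : mat) :
  (forall s, S s -> gen S' s) -> gen S x -> gen S' x.
Proof. by move=> SS' Sx; apply: Sx (gen_group_closed S') SS'. Qed.

Section GroupClosedCancel.

Variable P : mat -> Prop.
Hypothesis P_group : group_closed P.

Lemma group_closed_cancelr (x y : mat) :
  y \in unitmx -> P y -> P (x *m y) -> P x.
Proof.
case: P_group => _ PM PV yU Py Pxy.
by rewrite -(mulmxK yU x); apply: PM Pxy (PV _ Py).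
Qed.

Lemma group_closed_cancell (x y : mat) :
  y \in unitmx -> P y -> P (y *m x) -> P x.
Proof.
case: P_group => _ PM PV yU Py Pyx.
by rewrite -(mulKmx yU x); apply: PM (PV _ Py) Pyx.
Qed.

End GroupClosedCancel.

Definition mx2 (a b c d : int) : mat :=
  \matrix_(i, j) if i == ord0 then (if j == ord0 then a else b)
                 else (if j == ord0 then c else d).

Lemma eA_mx2 a b c d : eA (mx2 a b c d) = a. Proof. by rewrite /eA mxE. Qed.
Lemma eB_mx2 a b c d : eB (mx2 a b c d) = b. Proof. by rewrite /eB mxE. Qed.
Lemma eC_mx2 a b c d : eC (mx2 a b c d) = c. Proof. by rewrite /eC mxE. Qed.
Lemma eD_mx2 a b c d : eD (mx2 a b c d) = d. Proof. by rewrite /eD mxE. Qed.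
Definition mx2E := (eA_mx2, eB_mx2, eC_mx2, eD_mx2).

Lemma det_mx2 a b c d : \det (mx2 a b c d) = a * d - b * c.
Proof.
rewrite (expand_det_row _ ord0) !big_ord_recl big_ord0 /cofactor !det_mx11 !mxE /=.
by rewrite addr0 expr0 expr1 !mul1r mulN1r mulrN.
Qed.

Lemma eA_mul (x y : mat) : eA (x *m y) = eA x * eA y + eB x * eC y.
Proof.
rewrite /eA /eB /eC mxE !big_ord_recl big_ord0 addr0 /=.
by congr (_ + x _ _ * y _ _); apply: val_inj.
Qed.

Lemma eB_mul (x y : mat) : eB (x *m y) = eA x * eB y + eB x * eD y.
Proof.
rewrite /eA /eB /eD mxE !big_ord_recl big_ord0 addr0 /=.
by congr (_ + x _ _ * y _ _); apply: val_inj.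
Qed.

Lemma eC_mul (x y : mat) : eC (x *m y) = eC x * eA y + eD x * eC y.
Proof.
rewrite /eA /eC /eD mxE !big_ord_recl big_ord0 addr0 /=.
by congr (_ + x _ _ * y _ _); apply: val_inj.
Qed.

Lemma Tmat_mx2 : Tmat = mx2 1 1 0 1.
Proof.
by apply/matrixP => i j; rewrite !mxE; case: i => [[|[|?]] ?] //; case: j => [[|[|?]] ?].
Qed.

Lemma Wmat_mx2 (N : nat) : Wmat N = mx2 1 0 N%:Z 1.
Proof.
by apply/matrixP => i j; rewrite !mxE; case: i => [[|[|?]] ?] //; case: j => [[|[|?]] ?].
Qed.

Section CongruenceSubgroups.

Variable N : nat.

Lemma Gamma0_mx2 a b c d :
  Gamma0 N (mx2 a b c d) = (a * d - b * c == 1) && (N%:Z %| c)%Z.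
Proof. by rewrite /Gamma0 /SL2 det_mx2 eC_mx2. Qed.

Lemma Gamma0_mul (x y : mat) : Gamma0 N x -> Gamma0 N y -> Gamma0 N (x *m y).
Proof.
case/andP=> /eqP detx Nx /andP[/eqP dety Ny].
rewrite /Gamma0 /SL2 det_mulmx detx dety mul1r eqxx eC_mul.
by rewrite rpredD ?(dvdz_mulr _ Nx) ?(dvdz_mull _ Ny).
Qed.

Lemma Gamma0_unitmx (x : mat) : Gamma0 N x -> x \in unitmx.
Proof. by case/andP=> /eqP detx _; rewrite unitmxE detx unitr1. Qed.

Lemma Gamma1_Gamma0 (x : mat) : Gamma1 N x -> Gamma0 N x.
Proof. by case/and3P. Qed.

Lemma Gamma1_Tmat : Gamma1 N Tmat.
Proof. by rewrite /Gamma1 Tmat_mx2 Gamma0_mx2 !mx2E dvdz0 !eqxx. Qed.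

Lemma Gamma1_Wmat : Gamma1 N (Wmat N).
Proof. by rewrite /Gamma1 Wmat_mx2 Gamma0_mx2 !mx2E dvdzz !eqxx. Qed.

Lemma Gamma0_shear (k : int) : Gamma0 N (mx2 1 k 0 1).
Proof. by rewrite Gamma0_mx2 dvdz0 mulr1 mulr0 subr0 eqxx. Qed.

Lemma Gamma0_topleft (q n : int) : coprimez q (N%:Z * n) ->
  exists Y, [/\ Gamma0 N Y, eA Y = q & eC Y = N%:Z * n].
Proof.
case/coprimezP=> -[u v] /= bezout.
exists (mx2 q (- v) (N%:Z * n) u); rewrite Gamma0_mx2 !mx2E dvdz_mulr // andbT.
by split=> //; apply/eqP; rewrite -bezout; ring.
Qed.

End CongruenceSubgroups.

Lemma Hq_group_closed (N q : nat) : group_closed (Hq N q).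
Proof. exact: gen_group_closed. Qed.

Section HqTopLeft.

Variables (N q : nat) (Y : mat).
Hypotheses (Y_Gamma0 : Gamma0 N Y) (Y_topleft : eA Y = q%:Z).

Let HqY : Hq N q Y.
Proof. exact: gen_mem. Qed.

Let Y_unit : Y \in unitmx.
Proof. exact: Gamma0_unitmx Y_Gamma0. Qed.

Lemma Hq_shear (k : int) : Hq N q (mx2 1 k 0 1).
Proof.
apply: (group_closed_cancell (Hq_group_closed N q) Y_unit HqY).
apply: gen_mem; split; first exact: Gamma0_mul (Gamma0_shear N k).
by rewrite eA_mul !mx2E Y_topleft mulr1 mulr0 addr0.
Qed.

Lemma Hq_Wmat : Hq N q (Wmat N).
Proof.
apply: (group_closed_cancelr (Hq_group_closed N q) Y_unit HqY).
apply: gen_mem; split; first exact: Gamma0_mul (Gamma1_Gamma0 (Gamma1_Wmat N)) _.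
by rewrite eA_mul Wmat_mx2 !mx2E Y_topleft mul1r mul0r addr0.
Qed.

Lemma TW_sub_Hq (x : mat) : TW N x -> Hq N q x.
Proof.
move=> TWx; apply: TWx (Hq_group_closed N q) _ => _ [->|->]; last exact: Hq_Wmat.
by rewrite Tmat_mx2; apply: Hq_shear.
Qed.

Lemma Hq_of_shear_topleft (x : mat) (s : int) :
  Gamma0 N x -> eA (x *m mx2 1 (- s) 0 1 *m Y) = q%:Z -> Hq N q x.
Proof.
move=> x_Gamma0 topleft.
have shear_unit := Gamma0_unitmx (Gamma0_shear N (- s)).
apply: (group_closed_cancelr (Hq_group_closed N q) shear_unit (Hq_shear _)).
apply: (group_closed_cancelr (Hq_group_closed N q) Y_unit HqY).
apply: gen_mem; split=> //.
by rewrite Gamma0_mul // Gamma0_mul // Gamma0_shear.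
Qed.

End HqTopLeft.

Lemma shear_topleft_identity (r b n q w t : int) :
  r - 1 = w * n -> q - n * b = t * r -> r * q + (b - (b + w * t) * r) * n = q.
Proof.
move=> hr hq.
have er : r = w * n + 1 by rewrite -hr; ring.
have eq : q = n * b + t * r by rewrite -hq; ring.
by rewrite eq er; ring.
Qed.

Lemma Hq_Gamma1 (N q : nat) (m : int) (x : mat) :
  Gamma1 N x -> (m %| (eA x - 1) %/ N%:Z)%Z -> coprimez q%:Z (N%:Z * m) ->
  (q%:Z == N%:Z * m * eB x %[mod eA x])%Z -> Hq N q x.
Proof.
case/and3P=> x_Gamma0 + _; rewrite eqz_mod_dvd => N_r1 /dvdzP[w hw].
case/Gamma0_topleft=> Y [Y_Gamma0 Y_topleft Y_C]; rewrite eqz_mod_dvd => /dvdzP[t ht].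
have r1 : eA x - 1 = w * (N%:Z * m) by rewrite -(divzK N_r1) hw; ring.
apply: (Hq_of_shear_topleft Y_Gamma0 Y_topleft (s := eB x + w * t) x_Gamma0).
rewrite eA_mul !eB_mul !eA_mul !mx2E Y_topleft Y_C.
by rewrite -[RHS](shear_topleft_identity r1 ht); ring.
Qed.

Theorem lemma4p13 (N h : nat) (g gam : 'I_h -> mat) (m : 'I_h -> int) (q : nat) :
  (0 < N)%N ->
  (forall x, gen (fun s => exists i, s = g i) x <-> Gamma1 N x) ->
  (forall i, in_TW_double_coset N (g i) (gam i)) ->
  (forall i, (m i %| (eA (gam i) - 1) %/ N%:Z)%Z) ->
  (forall i, coprimez q%:Z (N%:Z * m i)) ->
  (forall i, (q%:Z == N%:Z * m i * eB (gam i) %[mod eA (gam i)])%Z) ->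
  forall x, Gamma1 N x -> Hq N q x.
Proof.
move=> _ gen_g_Gamma1 double_coset divides_m coprime_q congr_q x /gen_g_Gamma1 gen_x.
apply: gen_x (Hq_group_closed N q) _ => _ [i ->].
have TW_gen y : TW N y -> gen (fun s => exists i, s = g i) y.
  by apply: gen_subset => _ [->|->]; apply/gen_g_Gamma1;
    [exact: Gamma1_Tmat | exact: Gamma1_Wmat].
have unit_TW y : TW N y -> y \in unitmx.
  by move/TW_gen/gen_g_Gamma1/Gamma1_Gamma0/Gamma0_unitmx.
have [u [v [TWu TWv gam_uv]]] := double_coset i.
have gam_Gamma1 : Gamma1 N (gam i).
  apply/gen_g_Gamma1; rewrite gam_uv.
  exact: gen_mulmx (gen_mulmx (TW_gen _ TWu) (gen_mem (ex_intro _ i erefl))) (TW_gen _ TWv).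
have [Y [Y_Gamma0 Y_topleft _]] := Gamma0_topleft (coprime_q i).
have [Hq_u Hq_v] := (TW_sub_Hq Y_Gamma0 Y_topleft TWu, TW_sub_Hq Y_Gamma0 Y_topleft TWv).
apply: (group_closed_cancell (Hq_group_closed N q) (unit_TW _ TWu) Hq_u).
apply: (group_closed_cancelr (Hq_group_closed N q) (unit_TW _ TWv) Hq_v).
by rewrite -gam_uv; apply: Hq_Gamma1 (divides_m i) (coprime_q i) (congr_q i).
Qed.
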